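(* Consider the ARQ protocol without feedback described in the context. Let $\mathcal{T}^*_{\mathcal{P}_2}$ be the optimal value and $\Psi^*_{\mathcal{P}_2}$ an optimal policy of problem $\mathcal{P}_2$: maximize the throughput $\mathcal{T}(\Psi)$ over all admissible policies $\Psi$. If $\mathcal{T}^*_{\mathcal{P}_2}<\mathcal{T}_{\rm th}$, then problem $\mathcal{P}_1$ (minimize the packet drop probability $p_{\rm drop}(\Psi)$ over admissible policies subject to $\mathcal{T}(\Psi)\ge \mathcal{T}_{\rm th}$) is infeasible. Otherwise, $\Psi^*_{\mathcal{P}_2}$ is an optimal solution of $\mathcal{P}_1$.
   Context: System model. Time is slotted, $t=1,2,\dots$. The channel power gains $|h_t|^2$ are i.i.d. across slots with CDF $F_H$. A non-energy-harvesting transmitter sends packets at fixed rate $R$ and power $p_{\rm tx}$; let $|h_{\rm th}|^2=(2^R-1)/p_{\rm tx}$, $p_c=1-F_H(|h_{\rm th}|^2)$ and $\bar p_c=1-p_c$. Each packet may be transmitted at most $K>1$ times; $k_t\in\{0,1,\dots,K-1\}$ is the transmission index (the packet is in its $(k_t+1)$th transmission in slot $t$). The receiver harvests energy $E_{H,t}$ at the start of slot $t$, with $E_{H,t}$ i.i.d. taking values in a finite set of nonnegative integer multiples of an energy quantum $E$. Its battery level evolves as $b_{t+1}=\min\{b_t-E_{c,t}+E_{H,t+1},B_{\max}\}$, $b_1=E_{H,1}$, where $E_{c,t}$ is the energy consumed in slot $t$ and $B_{\max}$ is a finite multiple of $E$. Sampling a packet costs $E_{\rm s}$, decoding costs $E_{\rm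 d}$ (both positive multiples of $E$). In slot $t$ the receiver chooses $a_{s,t}\in\{0,1\}$ (sample or not). If it samples, it consumes $E_{\rm s}$; if moreover $|h_t|^2\ge|h_{\rm th}|^2$ (probability $p_c$, independently of the past), it decodes the packet correctly and consumes an additional $E_{\rm d}$; otherwise the sample is discarded with no further energy cost. The reception state $i_t\in\{0,1\}$ equals $1$ iff the packet currently being transmitted has already been decoded correctly. The system state is $\mathbf{s}_t=(b_t,k_t,i_t)$. ARQ without feedback: no acknowledgement is ever sent, so the transmitter starts a new packet every $K$ slots ($k_{t+1}=(k_t+1)\bmod K$, and $i_{t+1}=0$ whenever $k_{t+1}=0$). Admissible actions: $a_{s,t}=1$ is allowed only if $i_t=0$ and $b_t\ge E_{\rm s}+E_{\rm d}$; otherwise $a_{s,t}=0$. A policy $\Psi$ chooses actions based on the system state. Performance metrics: let $S_t$ be the event that a packet is decoded correctly in slot $t$, $N_t$ the event that a new packet starts in slot $t$, and $D_t$ the event that a packet is dropped in slot $t$ (i.e., $k_t=K-1$ and the packet has not been decoded correctly by the end of slot $t$). Throughput: $\mathcal{T}(\Psi)=\lim_{T\to\infty}\frac1T\mathbb{E}[\sum_{t=1}^T\mathbf{1}_{S_t}]$. Packet drop probability: $p_{\rm drop}(\Psi)=\frac{\lim_{T\to\infty}\frac1T\mathbb{E}[\sum_{t=1}^T\mathbf{1}_{D_t}]}{\lim_{T\to\infty}\frac1T\mathbb{E}[\sum_{t=1}^T\mathbf{1}_{N_t}]}$, where the limits are assumed to exist. $\mathcal{T}_{\rm th}$ is a given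 throughput requirement. *)

From Stdlib Require Import Reals Lra Arith.
Open Scope R_scope.

(* All energies are measured in units of the energy quantum E (so they are nats).
   A system state is (b, k, i) : nat * nat * bool (battery, transmission index,
   reception state).  Slots are 0-based here: index n denotes slot t = n+1. *)

Fixpoint fsum (n : nat) (f : nat -> R) : R :=
  match n with O => 0 | S m => fsum m f + f m end.

Definition ind (c : bool) : R := if c then 1 else 0.

(* A (randomized, Markov) policy: probability of sampling (a_s = 1) in slot n+1
   when the state is (b,k,i). *)
Definition policy := nat -> nat -> nat -> bool -> R.

Definition admissible (Es Ed : nat) (Psi : policy) : Prop :=
  forall n b k i,
    0 <= Psi n b k i <= 1 /\
    ((i = true \/ (b < Es + Ed)%nat) -> Psi n b k i = 0).

(* sum over all reachable states: b <= Bmax + Hmax (covers b_1 = E_{H,1}), k < K *)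
Definition ssum (K Bmax Hmax : nat) (f : nat -> nat -> bool -> R) : R :=
  fsum (S (Bmax + Hmax)) (fun b => fsum K (fun k => f b k false + f b k true)).

(* Probability of moving to (b',k',i') when the energy left in the battery
   after slot t is brem, and the packet state at the end of slot t is (k, i). *)
Definition next_prob (K Bmax Hmax : nat) (q : nat -> R)
  (brem k : nat) (i : bool) (b' k' : nat) (i' : bool) : R :=
  ind (Nat.eqb k' ((k + 1) mod K)) *
  ind (Bool.eqb i' (if Nat.eqb k' 0 then false else i)) *
  fsum (S Hmax) (fun h => q h * ind (Nat.eqb b' (Nat.min (brem + h) Bmax))).

Definition trans (K Bmax Hmax Es Ed : nat) (q : nat -> R) (pc a : R)
  (b k : nat) (i : bool) (b' k' : nat) (i' : bool) : R :=
  a * pc * next_prob K Bmax Hmax q (b - (Es + Ed)) k true b' k' i'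
  + a * (1 - pc) * next_prob K Bmax Hmax q (b - Es) k i b' k' i'
  + (1 - a) * next_prob K Bmax Hmax q b k i b' k' i'.

(* distribution of the state in slot n+1; initially b_1 = E_{H,1}, k_1 = 0, i_1 = 0 *)
Fixpoint dist (K Bmax Hmax Es Ed : nat) (q : nat -> R) (pc : R) (Psi : policy)
  (n : nat) : nat -> nat -> bool -> R :=
  match n with
  | O => fun b k i => if andb (Nat.eqb k 0) (negb i) then q b else 0
  | S m => fun b' k' i' =>
      ssum K Bmax Hmax (fun b k i =>
        dist K Bmax Hmax Es Ed q pc Psi m b k i *
        trans K Bmax Hmax Es Ed q pc (Psi m b k i) b k i b' k' i')
  end.

(* P(S_t): packet decoded correctly in slot t = n+1 *)
Definition probS K Bmax Hmax Es Ed q pc Psi (n : nat) : R :=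
  ssum K Bmax Hmax (fun b k i =>
    dist K Bmax Hmax Es Ed q pc Psi n b k i * Psi n b k i * pc).

(* P(N_t): a new packet starts in slot t = n+1 *)
Definition probN K Bmax Hmax Es Ed q pc Psi (n : nat) : R :=
  ssum K Bmax Hmax (fun b k i =>
    dist K Bmax Hmax Es Ed q pc Psi n b k i * ind (Nat.eqb k 0)).

(* P(D_t): k_t = K-1 and the packet is not decoded by the end of slot t = n+1 *)
Definition probD K Bmax Hmax Es Ed q pc Psi (n : nat) : R :=
  ssum K Bmax Hmax (fun b k i =>
    dist K Bmax Hmax Es Ed q pc Psi n b k i * ind (Nat.eqb k (K - 1)) *
    ind (negb i) * (1 - Psi n b k i * pc)).

(* (1/T) sum_{t=1}^T f_t, indexed by T-1 *)
Definition avg (f : nat -> R) (m : nat) : R := fsum (S m) f / INR (S m).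

Definition throughput K Bmax Hmax Es Ed q pc Psi (Tv : R) : Prop :=
  Un_cv (avg (probS K Bmax Hmax Es Ed q pc Psi)) Tv.

Definition pdrop K Bmax Hmax Es Ed q pc Psi (p : R) : Prop :=
  exists Dl Nl,
    Un_cv (avg (probD K Bmax Hmax Es Ed q pc Psi)) Dl /\
    Un_cv (avg (probN K Bmax Hmax Es Ed q pc Psi)) Nl /\
    p = Dl / Nl.

(* p_c = 1 - F_H(|h_th|^2), |h_th|^2 = (2^R - 1)/p_tx *)
Definition pcorr (FH : R -> R) (Rate ptx : R) : R :=
  1 - FH ((Rpower 2 Rate - 1) / ptx).

(* Once a packet is decoded the receiver may no longer sample it, so each packet
   is decoded at most once, and without feedback it occupies exactly K slots.
   Hence every packet is either decoded or dropped: new packets start at rate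
   1/K, are decoded at rate T(Psi), and so are dropped at rate 1/K - T(Psi),
   giving p_drop(Psi) = 1 - K T(Psi) for every admissible Psi.  The drop
   probability is thus a decreasing function of the throughput, and a
   throughput-maximising policy minimises it whenever P1 is feasible. *)
From Stdlib Require Import Reals Lra Lia Arith.
Open Scope R_scope.

Lemma fsum_ext n f g : (forall j, (j < n)%nat -> f j = g j) -> fsum n f = fsum n g.
Proof.
  induction n as [|n IH]; simpl; intros H; auto.
  rewrite IH by (intros; apply H; lia); rewrite H by lia; reflexivity.
Qed.

Lemma fsum_zero n f : (forall j, (j < n)%nat -> f j = 0) -> fsum n f = 0.
Proof.
  intros H; rewrite (fsum_ext _ _ (fun _ => 0)) by auto.
  induction n as [|n IH]; simpl; [|rewrite IH]; auto; ring.
Qed.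

Lemma fsum_plus n f g : fsum n (fun j => f j + g j) = fsum n f + fsum n g.
Proof. induction n as [|n IH]; simpl; [|rewrite IH]; ring. Qed.

Lemma fsum_minus n f g : fsum n (fun j => f j - g j) = fsum n f - fsum n g.
Proof. induction n as [|n IH]; simpl; [|rewrite IH]; ring. Qed.

Lemma fsum_scal_l n c f : fsum n (fun j => c * f j) = c * fsum n f.
Proof. induction n as [|n IH]; simpl; [|rewrite IH]; ring. Qed.

Lemma fsum_swap n m (f : nat -> nat -> R) :
  fsum n (fun a => fsum m (fun b => f a b)) = fsum m (fun b => fsum n (fun a => f a b)).
Proof.
  induction n as [|n IH]; simpl.
  - symmetry; apply fsum_zero; reflexivity.
  - rewrite IH, <- fsum_plus; reflexivity.
Qed.

Lemma fsum_single n j f :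
  (j < n)%nat -> (forall k, (k < n)%nat -> k <> j -> f k = 0) -> fsum n f = f j.
Proof.
  induction n as [|n IH]; intros Hj H; [lia|]; simpl.
  destruct (Nat.eq_dec j n) as [->|Hne].
  - rewrite fsum_zero by (intros; apply H; lia); ring.
  - rewrite IH by (try lia; intros; apply H; lia); rewrite (H n) by lia; ring.
Qed.

Lemma fsum_nonneg n f : (forall j, (j < n)%nat -> 0 <= f j) -> 0 <= fsum n f.
Proof.
  induction n as [|n IH]; simpl; intros H; [lra|].
  assert (0 <= f n) by (apply H; lia).
  assert (0 <= fsum n f) by (apply IH; intros; apply H; lia).
  lra.
Qed.

Lemma fsum_pad n m f : (forall j, (n <= j)%nat -> f j = 0) -> fsum (m + n) f = fsum n f.
Proof.
  intros H; induction m as [|m IH]; [reflexivity|].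
  change (fsum (S m + n) f) with (fsum (m + n) f + f (m + n)%nat).
  rewrite IH, H by lia; ring.
Qed.

Lemma ind_nonneg b : 0 <= ind b.
Proof. destruct b; simpl; lra. Qed.

Lemma Un_cv_close (u v : nat -> R) (C l : R) :
  (forall n, Rabs (u n - v n) <= C / INR (S n)) -> Un_cv v l -> Un_cv u l.
Proof.
  intros Hc Hv eps He.
  destruct (Hv (eps / 2)) as [N1 HN1]; [lra|].
  assert (HC : 0 <= C).
  { specialize (Hc O); simpl in Hc; pose proof (Rabs_pos (u O - v O)); lra. }
  destruct (INR_archimed (eps / 2) C) as [N2 HN2]; [lra|].
  exists (max N1 N2); intros n Hn; unfold Rdist in *.
  specialize (HN1 n ltac:(lia)); specialize (Hc n).
  assert (C / INR (S n) < eps / 2).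
  { assert (HS : 0 < INR (S n)) by (apply lt_0_INR; lia).
    assert (INR N2 <= INR (S n)) by (apply le_INR; lia).
    apply (Rmult_lt_reg_r (INR (S n))); auto.
    unfold Rdiv; rewrite Rmult_assoc, Rinv_l by lra; nra. }
  replace (u n - l) with ((u n - v n) + (v n - l)) by ring.
  eapply Rle_lt_trans; [apply Rabs_triang|]; lra.
Qed.

Lemma mod_succ K n : (1 < K)%nat ->
  (S n mod K = if Nat.eqb (n mod K) (K - 1) then 0 else S (n mod K))%nat.
Proof.
  intros HK.
  pose proof (Nat.div_mod n K ltac:(lia)); pose proof (Nat.mod_upper_bound n K ltac:(lia)).
  destruct (Nat.eqb_spec (n mod K) (K - 1)).
  - symmetry; apply (Nat.mod_unique _ _ (S (n / K))); lia.
  - symmetry; apply (Nat.mod_unique _ _ (n / K)); lia.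
Qed.

Section PacketBalance.
Variables (K : nat) (decoded_now undecoded : nat -> R).
Hypothesis HK : (1 < K)%nat.
Hypothesis undecoded0 : undecoded O = 1.
Hypothesis undecodedS : forall n,
  undecoded (S n) = if Nat.eqb (S n mod K) 0 then 1 else undecoded n - decoded_now n.
Hypothesis decoded_now_bounds :
  forall n, 0 <= decoded_now n <= undecoded n /\ undecoded n <= 1.

Definition packet_start n := ind (Nat.eqb (n mod K) 0).
Definition packet_drop n :=
  ind (Nat.eqb (n mod K) (K - 1)) * (undecoded n - decoded_now n).

(* Every started packet is eventually decoded or dropped; the defect at time n
   is the still undecoded mass of the current packet. *)
Lemma packet_balance n :
  fsum n (fun m => packet_drop m + decoded_now m - packet_start m)
  = packet_start n - undecoded n.
Proof.
  induction n as [|n IH]; simpl.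
  - unfold packet_start; rewrite Nat.Div0.mod_0_l, undecoded0; simpl; ring.
  - rewrite IH, undecodedS; unfold packet_start, packet_drop; rewrite (mod_succ K n HK).
    destruct (Nat.eqb_spec (n mod K) (K - 1)) as [E|E]; simpl.
    + rewrite E; replace (Nat.eqb (K - 1) 0) with false by (symmetry; apply Nat.eqb_neq; lia).
      simpl; ring.
    + destruct (Nat.eqb (n mod K) 0); simpl; ring.
Qed.

Lemma packet_start_count n :
  INR K * fsum n packet_start
  = INR n + INR (if Nat.eqb (n mod K) 0 then 0 else K - n mod K)%nat.
Proof.
  induction n as [|n IH].
  - simpl; rewrite Nat.Div0.mod_0_l; simpl; ring.
  - change (fsum (S n) packet_start) with (fsum n packet_start + packet_start n).
    rewrite Rmult_plus_distr_l, IH, (mod_succ K n HK), S_INR; unfold packet_start.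
    pose proof (Nat.mod_upper_bound n K ltac:(lia)).
    destruct (Nat.eqb_spec (n mod K) 0) as [E|E].
    + rewrite E; replace (Nat.eqb 0 (K - 1)) with false by (symmetry; apply Nat.eqb_neq; lia).
      simpl; rewrite (minus_INR K 1) by lia; simpl; ring.
    + destruct (Nat.eqb_spec (n mod K) (K - 1)) as [E2|E2]; simpl.
      * rewrite E2, !minus_INR by lia; simpl; ring.
      * rewrite !minus_INR, S_INR by lia; ring.
Qed.

Lemma avg_packet_start_cv : Un_cv (avg packet_start) (1 / INR K).
Proof.
  assert (HKp : 0 < INR K) by (apply lt_0_INR; lia).
  apply (Un_cv_close _ (fun _ => 1 / INR K) 1).
  - intros n; unfold avg; pose proof (packet_start_count (S n)) as Hcount.
    set (g := (if Nat.eqb (S n mod K) 0 then 0 else K - S n mod K)%nat) in *.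
    assert (Hg : INR g <= INR K) by (apply le_INR; unfold g; destruct Nat.eqb; lia).
    assert (HS : 0 < INR (S n)) by (apply lt_0_INR; lia).
    pose proof (pos_INR g).
    replace (fsum (S n) packet_start / INR (S n) - 1 / INR K)
      with (INR g / INR K * / INR (S n))
      by (apply (Rmult_eq_reg_r (INR K * INR (S n))); [field_simplify|]; nra).
    assert (Hratio : 0 <= INR g / INR K <= 1).
    { split; [apply Rmult_le_pos; [|left; apply Rinv_0_lt_compat]; lra|].
      apply (Rmult_le_reg_r (INR K)); [lra|].
      unfold Rdiv; rewrite Rmult_assoc, Rinv_l by lra; lra. }
    assert (0 < / INR (S n)) by (apply Rinv_0_lt_compat; lra).
    rewrite Rabs_right by (apply Rle_ge, Rmult_le_pos; lra).
    apply Rmult_le_compat_r; lra.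
  - intros e He; exists O; intros; unfold Rdist; rewrite Rminus_diag, Rabs_R0; auto.
Qed.

Lemma avg_packet_drop_cv T :
  Un_cv (avg decoded_now) T -> Un_cv (avg packet_drop) (1 / INR K - T).
Proof.
  intros HT.
  apply (Un_cv_close _ (fun n => avg packet_start n - avg decoded_now n) 2).
  - intros n; unfold avg; pose proof (packet_balance (S n)) as Hbal.
    rewrite fsum_minus, fsum_plus in Hbal.
    assert (HS : 0 < INR (S n)) by (apply lt_0_INR; lia).
    replace (fsum (S n) packet_drop / INR (S n)
             - (fsum (S n) packet_start / INR (S n) - fsum (S n) decoded_now / INR (S n)))
      with ((packet_start (S n) - undecoded (S n)) * / INR (S n))
      by (rewrite <- Hbal; field; lra).
    rewrite Rabs_mult, (Rabs_right (/ _)) by (left; apply Rinv_0_lt_compat; lra).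
    apply Rmult_le_compat_r; [left; apply Rinv_0_lt_compat; lra|].
    pose proof (decoded_now_bounds (S n)).
    assert (0 <= packet_start (S n) <= 1) by (unfold packet_start; destruct Nat.eqb; simpl; lra).
    apply Rabs_le; lra.
  - apply CV_minus; [apply avg_packet_start_cv | exact HT].
Qed.

End PacketBalance.

Lemma avg_ext f g : (forall n, f n = g n) -> forall m, avg f m = avg g m.
Proof. intros H m; unfold avg; rewrite (fsum_ext _ f g) by auto; reflexivity. Qed.

Lemma Un_cv_ext u v l : (forall n, u n = v n) -> Un_cv v l -> Un_cv u l.
Proof. intros H Hv e He; destruct (Hv e He) as [N HN]; exists N; intros; rewrite H; auto. Qed.

Section Model.
Variables (K Bmax Hmax Es Ed : nat) (q : nat -> R) (pc : R) (Psi : policy).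
Hypothesis HK : (1 < K)%nat.
Hypothesis q_nonneg : forall h, 0 <= q h.
Hypothesis q_support : forall h, (Hmax < h)%nat -> q h = 0.
Hypothesis q_sum1 : fsum (S Hmax) q = 1.
Hypothesis pc_bounds : 0 <= pc <= 1.
Hypothesis Psi_adm : admissible Es Ed Psi.

Notation D := (dist K Bmax Hmax Es Ed q pc Psi).

Definition bsum (f : nat -> R) := fsum (S (Bmax + Hmax)) f.

Definition packet_next k i k' i' :=
  ind (Nat.eqb k' ((k + 1) mod K)) * ind (Bool.eqb i' (if Nat.eqb k' 0 then false else i)).

Lemma bsum_next_prob brem k i k' i' :
  bsum (fun b' => next_prob K Bmax Hmax q brem k i b' k' i') = packet_next k i k' i'.
Proof.
  unfold bsum, next_prob, packet_next; rewrite fsum_scal_l, fsum_swap.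
  rewrite (fsum_ext _ _ q), q_sum1; [ring|].
  intros h _; rewrite fsum_scal_l, (fsum_single _ (Nat.min (brem + h) Bmax)).
  - rewrite Nat.eqb_refl; simpl; ring.
  - lia.
  - intros b' _ Hne; apply Nat.eqb_neq in Hne; rewrite Hne; simpl; ring.
Qed.

Lemma bsum_trans a b k i k' i' :
  bsum (fun b' => trans K Bmax Hmax Es Ed q pc a b k i b' k' i')
  = a * pc * packet_next k true k' i' + (1 - a * pc) * packet_next k i k' i'.
Proof.
  unfold trans, bsum; rewrite !fsum_plus, !fsum_scal_l.
  fold (bsum (fun b' => next_prob K Bmax Hmax q (b - (Es + Ed)) k true b' k' i')).
  fold (bsum (fun b' => next_prob K Bmax Hmax q (b - Es) k i b' k' i')).
  fold (bsum (fun b' => next_prob K Bmax Hmax q b k i b' k' i')).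
  rewrite !bsum_next_prob; ring.
Qed.

Lemma trans_nonneg a b k i b' k' i' :
  0 <= a <= 1 -> 0 <= trans K Bmax Hmax Es Ed q pc a b k i b' k' i'.
Proof.
  intros Ha.
  assert (Hnext : forall brem k i, 0 <= next_prob K Bmax Hmax q brem k i b' k' i').
  { intros; unfold next_prob.
    repeat apply Rmult_le_pos; try apply ind_nonneg.
    apply fsum_nonneg; intros; apply Rmult_le_pos; auto; apply ind_nonneg. }
  unfold trans.
  pose proof (Hnext (b - (Es + Ed))%nat k true); pose proof (Hnext (b - Es)%nat k i);
    pose proof (Hnext b k i).
  assert (0 <= a * pc) by nra; assert (0 <= a * (1 - pc)) by nra.
  repeat apply Rplus_le_le_0_compat; apply Rmult_le_pos; lra.
Qed.

Lemma dist_nonneg n b k i : 0 <= D n b k i.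
Proof.
  revert b k i; induction n as [|n IH]; intros; simpl.
  - destruct (andb _ _); auto; lra.
  - unfold ssum; apply fsum_nonneg; intros; apply fsum_nonneg; intros.
    apply Rplus_le_le_0_compat; apply Rmult_le_pos; auto; apply trans_nonneg, Psi_adm.
Qed.

Lemma ssum_at r f : (r < K)%nat -> (forall b k i, k <> r -> f b k i = 0) ->
  ssum K Bmax Hmax f = bsum (fun b => f b r false + f b r true).
Proof.
  intros Hr H; unfold ssum, bsum; apply fsum_ext; intros b _.
  apply (fsum_single K r (fun k => f b k false + f b k true)); auto.
  intros; rewrite !H by auto; ring.
Qed.

Lemma mod_lt n : (n mod K < K)%nat.
Proof. apply Nat.mod_upper_bound; lia. Qed.

Lemma dist_off_phase n b k i : k <> (n mod K)%nat -> D n b k i = 0.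
Proof.
  revert b k i; induction n as [|n IH]; intros b k i Hk; simpl.
  - rewrite Nat.Div0.mod_0_l in Hk; apply Nat.eqb_neq in Hk; rewrite Hk; reflexivity.
  - rewrite (ssum_at (n mod K)) by (auto using mod_lt; intros; rewrite IH by auto; ring).
    apply fsum_zero; intros b0 _.
    assert (Hk' : Nat.eqb k ((n mod K + 1) mod K) = false).
    { apply Nat.eqb_neq; rewrite Nat.Div0.add_mod_idemp_l, Nat.add_1_r; auto. }
    unfold trans, next_prob; rewrite Hk'; simpl; ring.
Qed.

Lemma bsum_dist_succ n k' i' :
  let r := (n mod K)%nat in
  bsum (fun b' => D (S n) b' k' i') =
  bsum (fun b =>
    D n b r false * (Psi n b r false * pc * packet_next r true k' i'
                     + (1 - Psi n b r false * pc) * packet_next r false k' i')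
    + D n b r true * (Psi n b r true * pc * packet_next r true k' i'
                      + (1 - Psi n b r true * pc) * packet_next r true k' i')).
Proof.
  intros r; unfold bsum at 1; cbn [dist].
  set (T b k i b' := trans K Bmax Hmax Es Ed q pc (Psi n b k i) b k i b' k' i').
  rewrite (fsum_ext _ _ (fun b' => bsum (fun b => D n b r false * T b r false b'
                                               + D n b r true * T b r true b'))).
  2:{ intros b' _; apply (ssum_at r (fun b k i => D n b k i * T b k i b')); [apply mod_lt|].
      intros; rewrite !dist_off_phase by auto; ring. }
  unfold bsum; rewrite fsum_swap; apply fsum_ext; intros b _.
  rewrite fsum_plus, !fsum_scal_l.
  fold (bsum (T b r false)); fold (bsum (T b r true)); unfold T; rewrite !bsum_trans.
  reflexivity.
Qed.

Definition undecoded n := bsum (fun b => D n b (n mod K) false).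
Definition decoded n := bsum (fun b => D n b (n mod K) true).
Definition decode_prob n :=
  pc * bsum (fun b => D n b (n mod K) false * Psi n b (n mod K) false).

Lemma packet_next_phase n i i' :
  packet_next (n mod K) i (S n mod K) i'
  = ind (Bool.eqb i' (if Nat.eqb (S n mod K) 0 then false else i)).
Proof.
  unfold packet_next; rewrite Nat.Div0.add_mod_idemp_l, Nat.add_1_r, Nat.eqb_refl; simpl; ring.
Qed.

Lemma Psi_decoded n b k : Psi n b k true = 0.
Proof. apply (proj2 (Psi_adm n b k true)); auto. Qed.

Lemma undecoded_succ n :
  undecoded (S n)
  = if Nat.eqb (S n mod K) 0 then undecoded n + decoded n else undecoded n - decode_prob n.
Proof.
  unfold undecoded at 1; rewrite bsum_dist_succ, !packet_next_phase.
  unfold undecoded, decoded, decode_prob, bsum.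
  destruct (Nat.eqb (S n mod K) 0); cbn [Bool.eqb ind].
  - rewrite <- fsum_plus; apply fsum_ext; intros; ring.
  - rewrite <- fsum_scal_l, <- fsum_minus; apply fsum_ext; intros; rewrite Psi_decoded; ring.
Qed.

Lemma decoded_succ n :
  decoded (S n) = if Nat.eqb (S n mod K) 0 then 0 else decoded n + decode_prob n.
Proof.
  unfold decoded at 1; rewrite bsum_dist_succ, !packet_next_phase.
  unfold undecoded, decoded, decode_prob, bsum.
  destruct (Nat.eqb (S n mod K) 0); cbn [Bool.eqb ind].
  - apply fsum_zero; intros; ring.
  - rewrite <- fsum_scal_l, <- fsum_plus; apply fsum_ext; intros; rewrite Psi_decoded; ring.
Qed.

Lemma decoded0 : decoded O = 0.
Proof. apply fsum_zero; intros; cbn [dist]; rewrite Nat.Div0.mod_0_l; reflexivity. Qed.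

Lemma undecoded_add_decoded n : undecoded n + decoded n = 1.
Proof.
  induction n as [|n IH].
  - rewrite decoded0; unfold undecoded, bsum; cbn [dist]; rewrite Nat.Div0.mod_0_l.
    rewrite (fsum_ext _ _ q) by reflexivity.
    replace (S (Bmax + Hmax)) with (Bmax + S Hmax)%nat by lia.
    rewrite fsum_pad, q_sum1 by (intros; apply q_support; lia); ring.
  - rewrite undecoded_succ, decoded_succ; destruct Nat.eqb; lra.
Qed.

Lemma decode_prob_bounds n : 0 <= decode_prob n <= undecoded n /\ undecoded n <= 1.
Proof.
  set (r := (n mod K)%nat).
  assert (0 <= decoded n) by (apply fsum_nonneg; intros; apply dist_nonneg).
  pose proof (undecoded_add_decoded n).
  assert (0 <= bsum (fun b => D n b r false * Psi n b r false)).
  { apply fsum_nonneg; intros; apply Rmult_le_pos; [apply dist_nonneg|apply Psi_adm]. }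
  assert (Hrest : undecoded n - decode_prob n
                  = bsum (fun b => D n b r false * (1 - Psi n b r false * pc))).
  { unfold undecoded, decode_prob, bsum; fold r; rewrite <- fsum_scal_l, <- fsum_minus.
    apply fsum_ext; intros; ring. }
  assert (0 <= bsum (fun b => D n b r false * (1 - Psi n b r false * pc))).
  { apply fsum_nonneg; intros b _; apply Rmult_le_pos; [apply dist_nonneg|].
    pose proof (Psi_adm n b r false); nra. }
  unfold decode_prob at 1; fold r; split; [split|]; nra.
Qed.

Lemma probS_decode_prob n : probS K Bmax Hmax Es Ed q pc Psi n = decode_prob n.
Proof.
  unfold probS, decode_prob; rewrite (ssum_at (n mod K)).
  - unfold bsum; rewrite <- fsum_scal_l; apply fsum_ext; intros; rewrite Psi_decoded; ring.
  - apply mod_lt.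
  - intros; rewrite dist_off_phase by auto; ring.
Qed.

Lemma probN_packet_start n : probN K Bmax Hmax Es Ed q pc Psi n = packet_start K n.
Proof.
  unfold probN, packet_start; rewrite (ssum_at (n mod K)).
  - transitivity (ind (Nat.eqb (n mod K) 0) * (undecoded n + decoded n)).
    + unfold undecoded, decoded, bsum; rewrite <- fsum_plus, <- fsum_scal_l.
      apply fsum_ext; intros; ring.
    + rewrite undecoded_add_decoded; ring.
  - apply mod_lt.
  - intros; rewrite dist_off_phase by auto; ring.
Qed.

Lemma probD_packet_drop n :
  probD K Bmax Hmax Es Ed q pc Psi n = packet_drop K decode_prob undecoded n.
Proof.
  unfold probD, packet_drop, undecoded, decode_prob; rewrite (ssum_at (n mod K)).
  - unfold bsum; rewrite <- fsum_scal_l, <- fsum_minus, <- fsum_scal_l.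
    apply fsum_ext; intros; simpl; ring.
  - apply mod_lt.
  - intros; rewrite dist_off_phase by auto; ring.
Qed.

Lemma avg_probN_cv : Un_cv (avg (probN K Bmax Hmax Es Ed q pc Psi)) (1 / INR K).
Proof.
  eapply Un_cv_ext; [apply avg_ext, probN_packet_start|]; apply avg_packet_start_cv, HK.
Qed.

Lemma avg_probD_cv T :
  throughput K Bmax Hmax Es Ed q pc Psi T ->
  Un_cv (avg (probD K Bmax Hmax Es Ed q pc Psi)) (1 / INR K - T).
Proof.
  intros HT; eapply Un_cv_ext; [apply avg_ext, probD_packet_drop|].
  apply avg_packet_drop_cv; auto.
  - pose proof (undecoded_add_decoded O); rewrite decoded0 in *; lra.
  - intros n; rewrite undecoded_succ, <- (undecoded_add_decoded n); reflexivity.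
  - apply decode_prob_bounds.
  - eapply Un_cv_ext; [symmetry; apply avg_ext, probS_decode_prob | exact HT].
Qed.

Lemma pdrop_throughput T p :
  throughput K Bmax Hmax Es Ed q pc Psi T ->
  (pdrop K Bmax Hmax Es Ed q pc Psi p <-> p = 1 - INR K * T).
Proof.
  intros HT; pose proof (avg_probD_cv T HT) as HD; pose proof avg_probN_cv as HN.
  assert (HKp : 0 < INR K) by (apply lt_0_INR; lia).
  split.
  - intros [Dl [Nl [HDl [HNl ->]]]].
    rewrite (UL_sequence _ _ _ HDl HD), (UL_sequence _ _ _ HNl HN); field; lra.
  - intros ->; exists (1 / INR K - T), (1 / INR K); repeat split; auto; field; lra.
Qed.

End Model.

Lemma pcorr_bounds FH Rate ptx :
  (forall x, 0 <= FH x <= 1) -> 0 <= pcorr FH Rate ptx <= 1.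
Proof. intros HFH; unfold pcorr; pose proof (HFH ((Rpower 2 Rate - 1) / ptx)); lra. Qed.

Theorem lemma1
  (K Bmax Hmax Es Ed : nat) (q : nat -> R) (FH : R -> R) (Rate ptx : R)
  (Tth Tstar : R) (Psistar : policy) :
  (1 < K)%nat -> (0 < Es)%nat -> (0 < Ed)%nat -> 0 < ptx ->
  (forall x, 0 <= FH x <= 1) ->
  (forall h, 0 <= q h) -> (forall h, (Hmax < h)%nat -> q h = 0) ->
  fsum (S Hmax) q = 1 ->
  admissible Es Ed Psistar ->
  throughput K Bmax Hmax Es Ed q (pcorr FH Rate ptx) Psistar Tstar ->
  (forall Psi Tv, admissible Es Ed Psi ->
     throughput K Bmax Hmax Es Ed q (pcorr FH Rate ptx) Psi Tv -> Tv <= Tstar) ->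
  (Tstar < Tth ->
     ~ (exists Psi Tv, admissible Es Ed Psi /\
          throughput K Bmax Hmax Es Ed q (pcorr FH Rate ptx) Psi Tv /\ Tth <= Tv)) /\
  (Tth <= Tstar ->
     exists pstar,
       pdrop K Bmax Hmax Es Ed q (pcorr FH Rate ptx) Psistar pstar /\
       Tth <= Tstar /\
       (forall Psi Tv p, admissible Es Ed Psi ->
          throughput K Bmax Hmax Es Ed q (pcorr FH Rate ptx) Psi Tv ->
          pdrop K Bmax Hmax Es Ed q (pcorr FH Rate ptx) Psi p ->
          Tth <= Tv -> pstar <= p)).
Proof.
  intros HK _ _ _ HFH Hq0 Hqz Hq1 Hadm Hth Hopt.
  pose proof (pcorr_bounds FH Rate ptx HFH) as Hpc.
  assert (HKp : 0 < INR K) by (apply lt_0_INR; lia).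
  split.
  - intros Hlt [Psi [Tv [HA [HT HTv]]]]; pose proof (Hopt Psi Tv HA HT); lra.
  - intros Hle; exists (1 - INR K * Tstar); split; [|split; [exact Hle|]].
    + apply (pdrop_throughput _ _ _ _ _ _ _ _ HK Hq0 Hqz Hq1 Hpc Hadm _ _ Hth); reflexivity.
    + intros Psi Tv p HA HT HP _.
      apply (pdrop_throughput _ _ _ _ _ _ _ _ HK Hq0 Hqz Hq1 Hpc HA _ _ HT) in HP.
      pose proof (Hopt Psi Tv HA HT); nra.
Qed.
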